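(* For every complex $s=\sigma+it$ with $\frac12<\sigma\leq\frac34$, $$|g(s)|<\frac{1.0053}{\sigma-\frac12}.$$
   Context: For $\mathrm{Re}(s)>1/2$ define $g(s)=\sum_{r\ge 2}\sum_{p}\frac{\log p}{p^{rs}}=\sum_p\frac{\log p}{p^s(p^s-1)}$, where $p$ runs over the primes. *)

From Stdlib Require Import Reals ZArith Znumtheory.
From Coquelicot Require Import Coquelicot.
Open Scope R_scope.

(* Complex power x^s for a real x > 0 and complex s = sigma + i t:
   x^s = exp(s log x) = x^sigma (cos(t log x) + i sin(t log x)). *)
Definition cpow (x : R) (s : C) : C :=
  (exp (fst s * ln x) * cos (snd s * ln x),
   exp (fst s * ln x) * sin (snd s * ln x)).

(* n-th term of the series defining g(s): log p / (p^s (p^s - 1)) if n = p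
   is prime, and 0 otherwise. *)
Definition g_term (s : C) (n : nat) : C :=
  if prime_dec (Z.of_nat n) then
    Cdiv (RtoC (ln (INR n))) (Cmult (cpow (INR n) s) (Cminus (cpow (INR n) s) (RtoC 1)))
  else RtoC 0.

(* With u = p^σ, the p-th term has modulus at most log p / (u (u - 1)), and
   1 / (u (u - 1)) = u^-2 + 1 / (u^2 (u - 1)).
   The first part is summed by parts against Chebyshev's bound
   θ(N + 1) <= N log 4, which follows from Erdős' bound 4^N on the product of
   the primes up to N + 1; comparing n^(-2σ) with the increments of
   n^(1-2σ) / (1 - 2σ) gives at most log 2 / (σ - 1/2).
   For the second part, y e^-y <= 1/e with y = 3 (σ - 1/2) log p gives
   (σ - 1/2) log p / (u^2 (u - 1)) <= 1 / (3e p (sqrt p - 1)), and the sum of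
   1 / (p (sqrt p - 1)) is at most 2.45: it is computed over p <= 36, and the
   tail telescopes against 2 / (sqrt n - 1).
   Hence |g(s)| <= (log 2 + 2.45 / (3e)) / (σ - 1/2) < 1.0053 / (σ - 1/2). *)

From Stdlib Require Import Reals ZArith Znumtheory Lia Lra.
From Coquelicot Require Import Coquelicot.
From mathcomp Require Import all_boot zify.

Close Scope R_scope.
Local Open Scope nat_scope.

Lemma Zprime_of_natE n : Znumtheory.prime (Z.of_nat n) <-> prime n.
Proof.
split.
- move/Znumtheory.prime_alt => [n_gt1 no_div].
  apply/primeP; split; first by apply/ltP; lia.
  move=> d /dvdnP [k n_eq].
  have {}n_eq : n = Nat.mul k d by [].
  case: (Nat.eq_dec d 1) => [->|d_neq1]; first by rewrite eqxx.
  case: (Nat.eq_dec d n) => [->|d_neqn]; first by rewrite eqxx orbT.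
  have k_neq0 : k <> 0 by move=> k0; rewrite k0 in n_eq; lia.
  have d_le : (d <= n)%coq_nat by nia.
  exfalso; apply: (no_div (Z.of_nat d)); first by lia.
  by exists (Z.of_nat k); rewrite n_eq; lia.
- move=> /primeP [/ltP n_gt1 n_div]; apply/Znumtheory.prime_alt.
  split; first by lia.
  move=> m m_range [z n_eq].
  have m_dvd : Z.to_nat m %| n.
    by apply/dvdnP; exists (Z.to_nat z); change (n = Nat.mul (Z.to_nat z) (Z.to_nat m)); nia.
  by case/orP: (n_div _ m_dvd) => /eqP; lia.
Qed.

Lemma bin_mid_sym m : 'C(m.*2.+1, m.+1) = 'C(m.*2.+1, m).
Proof. by rewrite -bin_sub; [congr binomial|]; lia. Qed.

(* The two equal middle terms of the expansion of (1 + 1)^(2m+1) sum to at most 2^(2m+1). *)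
Lemma bin_mid_le_4exp m : 'C(m.*2.+1, m) <= 4 ^ m.
Proof.
have sum_eq := expnDn 1 1 m.*2.+1.
have lt_m : m < m.*2.+2 by lia.
have lt_m1 : m.+1 < m.*2.+2 by lia.
rewrite (bigD1 (Ordinal lt_m)) //= (bigD1 (Ordinal lt_m1)) /= in sum_eq; last first.
  by apply/eqP => /(f_equal val) /=; lia.
rewrite !exp1n !muln1 bin_mid_sym in sum_eq.
have : 2 * 'C(m.*2.+1, m) <= 2 ^ m.*2.+1 by rewrite sum_eq; lia.
by rewrite expnS -mul2n expnM leq_pmul2l.
Qed.

(* Primes in (m+1, 2m+1] divide (2m+1)! but not (m+1)! m!. *)
Lemma prod_mid_primes_dvd_bin m :
  \prod_(m.+2 <= p < m.*2.+2 | prime p) p %| 'C(m.*2.+1, m).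
Proof.
have prod_eq : \prod_(m.+2 <= k < m.*2.+2) k = 'C(m.*2.+1, m) * m`!.
  apply/eqP; rewrite -(eqn_pmul2l (fact_gt0 m.+1)); apply/eqP.
  have fact_eq : m.*2.+1`! = m.+1`! * \prod_(m.+2 <= k < m.*2.+2) k.
    by apply: fact_split; lia.
  have := bin_fact (_ : m.+1 <= m.*2.+1); rewrite (_ : m.*2.+1 - m.+1 = m); last lia.
  rewrite fact_eq bin_mid_sym => /(_ (_ : m < m.*2.+1)) <-; last lia.
  by rewrite mulnCA mulnA [m.+1`! * _]mulnC.
have coprime_fact : coprime (\prod_(m.+2 <= p < m.*2.+2 | prime p) p) m`!.
  rewrite big_nat_cond; apply: (big_ind (coprime^~ m`!)).
  - exact: coprime1n.
  - by move=> x y cx cy; rewrite coprimeMl cx cy.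
  move=> p /andP[/andP [p_ge _] p_prime].
  rewrite prime_coprime // fact_prod big_nat_cond.
  apply: (big_ind (fun x => ~~ (p %| x))); first by rewrite Euclid_dvd1.
  - by move=> x y nx ny; rewrite Euclid_dvdM // negb_or nx ny.
  move=> i /andP [/andP [i_gt0 i_le] _]; apply/negP => /dvdn_leq.
  by move=> /(_ i_gt0); lia.
rewrite -(Gauss_dvdl _ coprime_fact) -prod_eq big_mkcond /=.
apply: (big_ind2 (fun x y => x %| y)) => //; first by move=> *; exact: dvdn_mul.
by move=> i _; case: (prime i).
Qed.

Definition primorial n := \prod_(0 <= p < n.+1 | prime p) p.

Lemma primorial_gt0 n : 0 < primorial n.
Proof.
apply: (big_ind (fun x => 0 < x)) => // [x y|p /prime_gt0 //].
by rewrite muln_gt0 => -> ->.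
Qed.

Lemma primorialS n : primorial n.+1 = primorial n * (if prime n.+1 then n.+1 else 1).
Proof. by rewrite /primorial big_mkcond big_nat_recr //= -big_mkcond. Qed.

(* Strong induction: n + 3 is not prime for odd n, and for n = 2k the product splits at k + 2. *)
Lemma primorial_le_4exp n : primorial n.+1 <= 4 ^ n.
Proof.
elim/ltn_ind: n => -[|[|n]] IH; try by rewrite /primorial unlock.
have [n_odd|n_even] := boolP (odd n).
- rewrite primorialS; have -> : prime n.+3 = false.
    apply/negP => /prime_nt_dvdP /(_ (isT : 2 != 1)).
    by rewrite dvdn2 /= negbK n_odd => /(_ isT); lia.
  by rewrite muln1 (leq_trans (IH n.+1 _)) // leq_exp2l.
- have [k n_eq] : exists k, n = k.*2.
    by exists n./2; rewrite -{1}(odd_double_half n) (negbTE n_even).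
  subst n.
  have split : primorial k.*2.+3 =
      primorial k.+2 * \prod_(k.+3 <= p < k.+1.*2.+2 | prime p) p.
    rewrite /primorial (@big_cat_nat _ _ _ k.+3) //; try lia.
  rewrite split (leq_trans (leq_mul (IH k.+1 _) (_ : _ <= 4 ^ k.+1))) //.
  - by lia.
  - apply: leq_trans (bin_mid_le_4exp k.+1).
    by apply: dvdn_leq (prod_mid_primes_dvd_bin k.+1); rewrite bin_gt0; lia.
  - by rewrite -expnD leq_exp2l //; lia.
Qed.

Local Open Scope R_scope.

Definition log_prime (n : nat) : R := if prime n then ln (INR n) else 0.

Lemma log_prime_ge0 n : 0 <= log_prime n.
Proof.
rewrite /log_prime; case: ifP => [/prime_gt1 n_gt1|_]; last lra.
by rewrite -ln_1; apply: ln_le; [lra | apply: (le_INR 1); lia].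
Qed.

Lemma INR_expn a k : INR (a ^ k)%N = INR a ^ k.
Proof. by elim: k => [|k IH] //; rewrite expnS /= mult_INR IH. Qed.

Lemma sum_log_primeE N : sum_f_R0 log_prime N = ln (INR (primorial N)).
Proof.
elim: N => [|N IH]; first by rewrite /= /log_prime /primorial unlock /= ln_1.
rewrite /= IH primorialS /log_prime; case: ifP => _; last by rewrite muln1; lra.
have := primorial_gt0 N => /ltP /lt_0_INR primorial_pos.
by rewrite mult_INR ln_mult //; apply: lt_0_INR; lia.
Qed.

Lemma sum_log_prime_le N : sum_f_R0 log_prime N.+1 <= ln 4 * INR N.
Proof.
rewrite sum_log_primeE Rmult_comm -ln_pow; last lra.
apply: ln_le; first by apply: lt_0_INR; apply/ltP; exact: primorial_gt0.
have -> : 4 = INR 4 by rewrite /=; lra.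
by rewrite -INR_expn; apply: le_INR; apply/leP; exact: primorial_le_4exp.
Qed.

Section AbelSummation.

Variables (w f F : nat -> R) (c : R).
Hypotheses (c_ge0 : 0 <= c) (w0 : w 0%N = 0) (w1 : w 1%N = 0).
Hypothesis sum_w_le : forall M, sum_f_R0 w M.+1 <= c * INR M.
Hypothesis f_ge0 : forall n, 0 <= f n.
Hypothesis f_noninc : forall n, (1 <= n)%N -> f n.+1 <= f n.
Hypothesis F_ge0 : forall n, 0 <= F n.
Hypothesis f_le_diffF : forall n, (2 <= n)%N -> f n <= F n.-1 - F n.

Lemma sum_abel_le M :
  sum_f_R0 (fun n => w n * f n) M.+1 + (c * INR M - sum_f_R0 w M.+1) * f M.+1
  <= c * (F 1%N - F M.+1).
Proof.
elim: M => [|M IH]; first by rewrite /= w0 w1; lra.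
have sum_le := sum_w_le M; have f_le := f_noninc M.+1 isT.
have diffF_le : f M.+2 <= F M.+1 - F M.+2 := f_le_diffF M.+2 isT.
rewrite [INR M.+1]S_INR /=; simpl in IH, sum_le.
set T := sum_f_R0 w M + w M.+1 in IH sum_le *.
have : (c * INR M - T) * f M.+2 <= (c * INR M - T) * f M.+1.
  by apply: Rmult_le_compat_l; lra.
have : c * f M.+2 <= c * (F M.+1 - F M.+2) by apply: Rmult_le_compat_l.
lra.
Qed.

Lemma sum_abel_le_bound N : sum_f_R0 (fun n => w n * f n) N <= c * F 1%N.
Proof.
have cF1_ge0 : 0 <= c * F 1%N by apply: Rmult_le_pos.
case: N => [|M]; first by rewrite /= w0; lra.
have abel := sum_abel_le M; have sum_le := sum_w_le M.
have : 0 <= (c * INR M - sum_f_R0 w M.+1) * f M.+1.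
  by apply: Rmult_le_pos; [lra | exact: f_ge0].
have : 0 <= c * F M.+1 by apply: Rmult_le_pos.
lra.
Qed.

End AbelSummation.

Lemma sqrt_gt1 x : 1 < x -> 1 < sqrt x.
Proof. by move=> x_gt1; rewrite -sqrt_1; apply: sqrt_lt_1_alt; lra. Qed.

Lemma inv_mul_sqrt_sub1_gt0 x : 1 < x -> 0 < / (x * (sqrt x - 1)).
Proof.
by move=> x_gt1; have := sqrt_gt1 x x_gt1 => sqrtx_gt1; apply: Rinv_0_lt_compat; nra.
Qed.

Lemma inv_le_ln_sub x : 1 < x -> / x <= ln x - ln (x - 1).
Proof.
move=> x_gt1.
have ratio_pos : 0 < (x - 1) / x by apply: Rdiv_lt_0_compat; lra.
have := exp_ineq1_le (ln ((x - 1) / x)).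
rewrite exp_ln // ln_div; try lra.
have -> : (x - 1) / x = 1 - / x by field; lra.
lra.
Qed.

(* x^(-1-b) is at most the integral of t^(-1-b) over [x - 1, x]. *)
Lemma Rpower_neg_le_sub x b : 1 < x -> 0 < b ->
  Rpower x (- (1 + b)) <= (Rpower (x - 1) (- b) - Rpower x (- b)) / b.
Proof.
move=> x_gt1 b_pos.
set P := Rpower x (- b); set q := ln x - ln (x - 1).
have P_pos : 0 < P by apply: exp_pos.
have q_ge : / x <= q by apply: inv_le_ln_sub.
have -> : Rpower x (- (1 + b)) = P / x.
  rewrite Ropp_plus_distr Rpower_plus Rpower_Ropp Rpower_1; last lra.
  by rewrite /Rdiv Rmult_comm.
have -> : Rpower (x - 1) (- b) = P * exp (b * q).
  by rewrite /P /Rpower -exp_plus /q; congr exp; ring.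
have := exp_ineq1_le (b * q) => exp_ge.
have : P / x <= P * q by apply: Rmult_le_compat_l; lra.
have : P * (1 + b * q) <= P * exp (b * q) by apply: Rmult_le_compat_l; lra.
have -> : (P * exp (b * q) - P) / b = P * exp (b * q) / b - P / b by field; lra.
have -> : P * q = P * (1 + b * q) / b - P / b by field; lra.
move=> le1 le2; apply: Rle_trans le2 _.
apply: Rplus_le_compat_r; rewrite /Rdiv.
by apply: Rmult_le_compat_r; [apply: Rlt_le; apply: Rinv_0_lt_compat | ].
Qed.

Lemma mul_exp_neg_le y : y * exp (- y) <= exp (- 1).
Proof.
have ey_pos := exp_pos (y - 1); have e_pos := exp_pos (- 1).
have y_le : y <= exp (y - 1) by have := exp_ineq1_le (y - 1); lra.
have -> : exp (- y) = exp (- 1) * / exp (y - 1).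
  by rewrite -exp_Ropp -exp_plus; congr exp; ring.
have : y * / exp (y - 1) <= 1.
  apply: (Rmult_le_reg_r (exp (y - 1))) => //.
  by rewrite Rmult_assoc Rinv_l; lra.
nra.
Qed.

Lemma exp_neg1_le : exp (- 1) <= 10/27.
Proof.
have := exp_ge_taylor 1 5 ltac:(lra); rewrite /= => e_ge.
rewrite exp_Ropp; apply: (Rmult_le_reg_l (exp 1)); first exact: exp_pos.
by rewrite Rinv_r; lra.
Qed.

Lemma ln2_le : ln 2 <= 7/10.
Proof.
have := exp_ge_taylor (7/10) 4 ltac:(lra); rewrite /= => exp_ge.
by rewrite -(ln_exp (7/10)); apply: ln_le; lra.
Qed.

(* With x^σ = sqrt x * w and w = x^(σ-1/2) >= 1, the denominator is at least
   x w^3 (sqrt x - 1), and (σ - 1/2) ln x / w^3 = y exp (-y) / 3 for y = 3 (σ - 1/2) ln x. *)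
Lemma ln_div_Rpower_le x σ : 1 < x -> 1/2 < σ ->
  (σ - 1/2) * (ln x / (Rpower x σ ^ 2 * (Rpower x σ - 1)))
  <= exp (- 1) / 3 * / (x * (sqrt x - 1)).
Proof.
move=> x_gt1 σ_gt.
set a := σ - 1/2; set L := ln x; set w := Rpower x a.
have L_pos : 0 < L by rewrite /L -ln_1; apply: ln_increasing; lra.
have aL_pos : 0 < a * L by apply: Rmult_lt_0_compat; rewrite /a; lra.
have w_ge1 : 1 <= w by have := exp_ineq1_le (a * L); rewrite /w /Rpower -/L; lra.
have sqrtx_gt1 := sqrt_gt1 x x_gt1.
have sqrt_sq : sqrt x * sqrt x = x by apply: sqrt_sqrt; lra.
have -> : Rpower x σ = sqrt x * w.
  rewrite -Rpower_sqrt; last lra.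
  by rewrite /w -Rpower_plus; congr Rpower; rewrite /a; field.
have w3 : w * w * w = exp (3 * (a * L)).
  by rewrite /w /Rpower -!exp_plus; congr exp; rewrite -/L; ring.
have w3_pos : 0 < w * w * w by rewrite w3; apply: exp_pos.
set D := x * (w * w * w) * (sqrt x - 1).
have D_pos : 0 < D.
  by rewrite /D; apply: Rmult_lt_0_compat; [apply: Rmult_lt_0_compat | ]; lra.
have D_le : D <= (sqrt x * w) ^ 2 * (sqrt x * w - 1).
  have -> : (sqrt x * w) ^ 2 * (sqrt x * w - 1) = D + x * (w * w) * (w - 1).
    by rewrite /D; move: sqrt_sq; generalize (sqrt x) => s <-; ring.
  have : 0 <= x * (w * w) * (w - 1) by apply: Rmult_le_pos; nra.
  lra.
have -> : exp (- 1) / 3 * / (x * (sqrt x - 1)) = exp (- 1) / 3 * (w * w * w) / D.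
  by rewrite /D; field; repeat split; nra.
have := mul_exp_neg_le (3 * (a * L)); rewrite exp_Ropp -w3 => yexp_le.
have : a * (L / ((sqrt x * w) ^ 2 * (sqrt x * w - 1))) <= a * L / D.
  rewrite /Rdiv -Rmult_assoc; apply: Rmult_le_compat_l; first lra.
  by apply: Rinv_le_contravar.
have : a * L / D <= exp (- 1) / 3 * (w * w * w) / D.
  apply: Rmult_le_compat_r; first by apply: Rlt_le; apply: Rinv_0_lt_compat.
  apply: (Rmult_le_reg_r (/ (w * w * w))); first by apply: Rinv_0_lt_compat.
  have -> : exp (-1) / 3 * (w * w * w) * / (w * w * w) = exp (-1) / 3 by field; lra.
  lra.
lra.
Qed.

Lemma inv_mul_sqrt_le_sub x : 1 < x ->
  / ((x + 1) * (sqrt (x + 1) - 1)) <= 2 / (sqrt x - 1) - 2 / (sqrt (x + 1) - 1).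
Proof.
move=> x_gt1.
set v := sqrt x; set u := sqrt (x + 1).
have v_gt1 : 1 < v by apply: sqrt_gt1.
have v_lt_u : v < u by apply: sqrt_lt_1_alt; lra.
have vv : v * v = x by apply: sqrt_sqrt; lra.
have uu : u * u = x + 1 by apply: sqrt_sqrt; lra.
have -> : 2 / (v - 1) - 2 / (u - 1) = 2 * (u - v) / ((v - 1) * (u - 1)) by field; lra.
have key : v - 1 <= 2 * (u - v) * (u * u).
  have : (u - v) * (u + v) = 1 by nra.
  nra.
rewrite -uu; set A := u * u * (u - 1); set B := (v - 1) * (u - 1).
have A_pos : 0 < A by rewrite /A; nra.
have B_pos : 0 < B by rewrite /B; nra.
apply: (Rmult_le_reg_r (A * B)); first exact: Rmult_lt_0_compat.
have -> : / A * (A * B) = B by field; lra.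
have -> : 2 * (u - v) / B * (A * B) = 2 * (u - v) * A by field; lra.
rewrite /A /B; nra.
Qed.

Definition sqrt_weight (n : nat) : R :=
  if prime n then / (INR n * (sqrt (INR n) - 1)) else 0.

Lemma sqrt_weight_ge0 n : 0 <= sqrt_weight n.
Proof.
rewrite /sqrt_weight; case: ifP => [/prime_gt1 n_gt1|_]; last lra.
by apply: Rlt_le; apply: inv_mul_sqrt_sub1_gt0; apply: (lt_INR 1); apply/ltP.
Qed.

Lemma sqrt_weight_le n : (2 <= n)%N -> sqrt_weight n <= / (INR n * (sqrt (INR n) - 1)).
Proof.
move=> n_ge2; have n_gt1 : 1 < INR n by apply: (lt_INR 1); apply/ltP.
rewrite /sqrt_weight; case: ifP => _; first lra.
by apply: Rlt_le; apply: inv_mul_sqrt_sub1_gt0.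
Qed.

Lemma sum_sqrt_weight_tail m k : (2 <= m)%N ->
  sum_f_R0 sqrt_weight (m + k) + 2 / (sqrt (INR (m + k)) - 1)
  <= sum_f_R0 sqrt_weight m + 2 / (sqrt (INR m) - 1).
Proof.
move=> m_ge2; elim: k => [|k IH]; first by rewrite addn0; lra.
have x_gt1 : 1 < INR (m + k) by apply: (lt_INR 1); apply/ltP; lia.
have := inv_mul_sqrt_le_sub _ x_gt1; rewrite -S_INR.
have := sqrt_weight_le (m + k).+1 ltac:(lia).
rewrite addnS tech5; lra.
Qed.

Lemma inv_mul_sqrt_le x q : 1 < q -> q * q <= x ->
  / (x * (sqrt x - 1)) <= / (x * (q - 1)).
Proof.
move=> q_gt1 qq_le.
have q_le : q <= sqrt x.
  by rewrite -(sqrt_square q); [apply: sqrt_le_1_alt | lra].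
apply: Rinv_le_contravar; first by apply: Rmult_lt_0_compat; nra.
by apply: Rmult_le_compat_l; nra.
Qed.

Definition sqrt_lb (n : nat) : R :=
  match n with
  | 2%N => 1414/1000 | 3%N => 1732/1000 | 5%N => 2236/1000 | 7%N => 2645/1000
  | 11%N => 3316/1000 | 13%N => 3605/1000 | 17%N => 4123/1000 | 19%N => 4358/1000
  | 23%N => 4795/1000 | 29%N => 5385/1000 | 31%N => 5567/1000 | _ => 0
  end.

Lemma sqrt_lbP n : (n <= 36)%N -> prime n -> 1 < sqrt_lb n /\ sqrt_lb n * sqrt_lb n <= INR n.
Proof.
move=> n_le; do 37 (case: n n_le => [|n] n_le; first by [] || (move=> _; rewrite /=; lra)).
by [].
Qed.

Lemma sum_sqrt_weight_36 : sum_f_R0 sqrt_weight 36 <= 205/100.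
Proof.
apply: Rle_trans (_ : sum_f_R0 (fun n => if prime n then / (INR n * (sqrt_lb n - 1)) else 0) 36 <= _).
  apply: sum_Rle => n /leP n_le; rewrite /sqrt_weight; case: ifP => n_prime; last lra.
  by have [lb_gt1 lb_le] := sqrt_lbP n n_le n_prime; apply: inv_mul_sqrt_le.
rewrite /=; lra.
Qed.

Lemma sum_sqrt_weight_le N : sum_f_R0 sqrt_weight N <= 245/100.
Proof.
have sum36 := sum_sqrt_weight_36.
have [N_lt|N_ge] := ltnP N 36.
  rewrite (tech2 sqrt_weight N 36) in sum36; last exact/ltP.
  set tail := sum_f_R0 _ (36 - N.+1) in sum36.
  have : 0 <= tail by apply: cond_pos_sum => i; exact: sqrt_weight_ge0.
  lra.
have := sum_sqrt_weight_tail 36 (N - 36) isT; rewrite subnKC //.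
have sqrt36 : sqrt (INR 36) = 6.
  by rewrite (_ : INR 36 = 6 * 6); [apply: sqrt_square | rewrite /=]; lra.
have : 0 <= 2 / (sqrt (INR N) - 1).
  have N_gt1 : 1 < INR N by apply: (lt_INR 1); apply/ltP; lia.
  have := sqrt_gt1 _ N_gt1 => sqrtN_gt1.
  by apply: Rlt_le; apply: Rdiv_lt_0_compat; lra.
rewrite sqrt36; lra.
Qed.

Lemma sum_log_prime_Rpower_le σ N : 1/2 < σ ->
  sum_f_R0 (fun n => log_prime n * Rpower (INR n) (- (2 * σ))) N <= ln 4 / (2 * σ - 1).
Proof.
move=> σ_gt; set b := 2 * σ - 1; have b_pos : 0 < b by rewrite /b; lra.
have -> : ln 4 / b = ln 4 * (Rpower (INR 1) (- b) / b).
  by rewrite /Rpower /= ln_1 Rmult_0_r exp_0 /Rdiv Rmult_1_l.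
apply: (sum_abel_le_bound _ _ (fun n => Rpower (INR n) (- b) / b)).
- by rewrite -ln_1; apply: ln_le; lra.
- by rewrite /log_prime.
- by rewrite /log_prime.
- exact: sum_log_prime_le.
- by move=> n; apply: Rlt_le; apply: exp_pos.
- move=> n n_ge1; have n_pos : 0 < INR n by apply: lt_0_INR; apply/ltP.
  rewrite !Rpower_Ropp; apply: Rinv_le_contravar; first exact: exp_pos.
  by apply: Rle_Rpower_l; [lra | rewrite S_INR; lra].
- by move=> n; apply: Rlt_le; apply: Rdiv_lt_0_compat => //; apply: exp_pos.
- move=> [|[|n]] // _; have x_gt1 : 1 < INR n.+2 by apply: (lt_INR 1); apply/ltP.
  have := Rpower_neg_le_sub _ _ x_gt1 b_pos.
  rewrite (_ : 1 + b = 2 * σ); last by rewrite /b; ring.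
  rewrite (_ : INR n.+2 - 1 = INR n.+2.-1); last by rewrite [INR n.+2]S_INR /=; ring.
  by rewrite /Rdiv -Rmult_minus_distr_r.
Qed.

Definition g_majorant (σ : R) (n : nat) : R :=
  log_prime n / (Rpower (INR n) σ * (Rpower (INR n) σ - 1)).

Lemma Rpower_gt1 x y : 1 < x -> 0 < y -> 1 < Rpower x y.
Proof. by move=> x_gt1 y_pos; rewrite -(Rpower_O x) //; [apply: Rpower_lt | lra]. Qed.

Lemma g_majorant_le σ n : 1/2 < σ ->
  g_majorant σ n <= log_prime n * Rpower (INR n) (- (2 * σ))
                    + sqrt_weight n * (exp (- 1) / (3 * (σ - 1/2))).
Proof.
move=> σ_gt; rewrite /g_majorant /sqrt_weight /log_prime.
case: ifP => [/prime_gt1 n_gt1|_]; last by rewrite /Rdiv !Rmult_0_l; lra.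
have x_gt1 : 1 < INR n by apply: (lt_INR 1); apply/ltP.
have := ln_div_Rpower_le _ _ x_gt1 σ_gt.
have u_gt1 := Rpower_gt1 _ σ x_gt1 ltac:(lra).
set u := Rpower (INR n) σ in u_gt1 *; set L := ln (INR n); set W := / (_ * _).
have -> : Rpower (INR n) (- (2 * σ)) = / u ^ 2.
  by rewrite Rpower_Ropp (_ : 2 * σ = σ + σ); [rewrite Rpower_plus /= Rmult_1_r | ring].
have -> : L / (u * (u - 1)) = L * / u ^ 2 + L / (u ^ 2 * (u - 1)) by field; lra.
have -> : W * (exp (- 1) / (3 * (σ - 1/2))) = exp (- 1) / 3 * W / (σ - 1/2) by field; lra.
move=> partB_le; apply: Rplus_le_compat_l.
apply: (Rmult_le_reg_l (σ - 1/2)); first lra.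
by have -> : (σ - 1/2) * (exp (- 1) / 3 * W / (σ - 1/2)) = exp (- 1) / 3 * W by field; lra.
Qed.

Lemma sum_g_majorant_le σ N : 1/2 < σ ->
  sum_f_R0 (g_majorant σ) N <= (ln 2 + exp (- 1) / 3 * (245/100)) / (σ - 1/2).
Proof.
move=> σ_gt; set c := exp (- 1) / (3 * (σ - 1/2)).
have c_pos : 0 < c by apply: Rdiv_lt_0_compat; [apply: exp_pos | lra].
apply: Rle_trans (sum_Rle _ _ N (fun n _ => g_majorant_le σ n σ_gt)) _.
rewrite sum_plus -scal_sum -/c.
have := sum_log_prime_Rpower_le σ N σ_gt; have := sum_sqrt_weight_le N.
have -> : ln 4 = 2 * ln 2 by rewrite (_ : 4 = 2 * 2); [rewrite ln_mult; lra | lra].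
have -> : (ln 2 + exp (- 1) / 3 * (245/100)) / (σ - 1/2)
        = 2 * ln 2 / (2 * σ - 1) + c * (245/100) by rewrite /c; field; lra.
move=> sumW_le sumA_le; have := Rmult_le_compat_l c _ _ (Rlt_le _ _ c_pos) sumW_le.
lra.
Qed.

Lemma Cmod_cpow x s : 0 < x -> Cmod (cpow x s) = Rpower x (fst s).
Proof.
move=> x_pos; rewrite /Cmod /cpow /= -/(Rpower x (fst s)).
set r := Rpower x (fst s); have r_pos : 0 < r by apply: exp_pos.
have -> : (r * cos (snd s * ln x)) ^ 2 + (r * sin (snd s * ln x)) ^ 2 = r ^ 2.
  by have := sin2_cos2 (snd s * ln x); rewrite /Rsqr; nra.
by apply: sqrt_pow2; lra.
Qed.

Lemma Cmod_g_term_le s n : 0 < fst s -> Cmod (g_term s n) <= g_majorant (fst s) n.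
Proof.
move=> σ_pos; rewrite /g_term /g_majorant /log_prime.
case: prime_dec => [/Zprime_of_natE n_prime|/Zprime_of_natE /negP /negbTE ->];
  last by rewrite Cmod_0 /Rdiv Rmult_0_l; lra.
rewrite n_prime; have x_gt1 : 1 < INR n by apply: (lt_INR 1); apply/ltP/prime_gt1.
set z := cpow (INR n) s.
have z_mod : Cmod z = Rpower (INR n) (fst s) by rewrite Cmod_cpow //; lra.
have u_gt1 := Rpower_gt1 _ _ x_gt1 σ_pos; rewrite -z_mod in u_gt1 *.
have z1_mod : Cmod z - 1 <= Cmod (Cminus z 1).
  have := Cmod_triangle (Cminus z 1) 1.
  by rewrite Cmod_1 (_ : Cplus (Cminus z 1) 1 = z); [lra | ring].
have z1_pos : 0 < Cmod (Cminus z 1) by lra.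
rewrite Cmod_div; last by apply: Cmult_neq_0; apply/Cmod_gt_0; lra.
rewrite Cmod_mult Cmod_R Rabs_pos_eq; last by rewrite -ln_1; apply: ln_le; lra.
apply: Rmult_le_compat_l; first by rewrite -ln_1; apply: ln_le; lra.
by apply: Rinv_le_contravar; [nra | apply: Rmult_le_compat_l; lra].
Qed.

Section NormSeries.

Context {K : AbsRing} {V : CompleteNormedModule K}.

Lemma norm_sum_n_le (a : nat -> V) (b : nat -> R) :
  (forall n, norm (a n) <= b n) -> forall N, norm (sum_n a N) <= sum_n b N.
Proof.
move=> a_le; elim=> [|N IH]; first by rewrite !sum_O.
rewrite !sum_Sn; apply: Rle_trans (norm_triangle _ _) _.
by have := a_le N.+1; rewrite /plus /=; lra.
Qed.

Lemma is_series_norm_le (a : nat -> V) (b : nat -> R) (B : R) :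
  (forall n, norm (a n) <= b n) -> (forall N, sum_n b N <= B) ->
  exists l, is_series a l /\ norm l <= B.
Proof.
move=> a_le b_sum_le.
have b_ge0 n : 0 <= b n by apply: Rle_trans (norm_ge_0 _) (a_le n).
have [lb lb_lim] : ex_finite_lim_seq (sum_n b).
  apply: (ex_finite_lim_seq_incr _ B) => // n.
  by rewrite sum_Sn /plus /=; have := b_ge0 n.+1; lra.
have [l a_series] := ex_series_le a b a_le (ex_intro _ lb lb_lim).
exists l; split => //.
have norm_lim : is_lim_seq (fun N => norm (sum_n a N)) (norm l).
  exact: filterlim_comp _ _ _ _ _ _ _ _ a_series (filterlim_norm l).
have := is_lim_seq_le _ _ _ _ _ norm_lim (is_lim_seq_const B); apply => N.
exact: Rle_trans (norm_sum_n_le a b a_le N) (b_sum_le N).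
Qed.

End NormSeries.

Theorem mainTheorem7 :
  forall s : C, 1/2 < fst s <= 3/4 ->
    exists l : C, is_series (g_term s) l /\
      Cmod l < (10053 / 10000) / (fst s - 1/2).
Proof.
move=> s [σ_gt _].
set B := (ln 2 + exp (- 1) / 3 * (245/100)) / (fst s - 1/2).
have [l [l_series l_le]] : exists l, is_series (g_term s) l /\ norm l <= B.
  apply: (is_series_norm_le _ (g_majorant (fst s))) => [n | N].
  - by apply: Cmod_g_term_le; lra.
  - by rewrite sum_n_Reals; exact: sum_g_majorant_le.
exists l; split => //; apply: Rle_lt_trans l_le _.
apply: Rmult_lt_compat_r; first by apply: Rinv_0_lt_compat; lra.
have := exp_neg1_le; have := ln2_le; lra.
Qed.
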